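(* Let $R$ be a commutative Noetherian ring with unity, $\lambda$ a length function on $R$-modules, $T$ a finitely generated commutative $R$-algebra, $M$ a $T$-module, and $M_0\le M$ an $R$-submodule which is finitely generated as an $R$-module, with $\lambda(M_0)<\infty$ and $TM_0=M$. Let $\bar\gamma\in T^k$ and $\bar\delta\in T^{k'}$ be two tuples of generators of $T$ as an $R$-algebra. Then the Hilbert polynomials $q_{\bar\gamma}$ and $q_{\bar\delta}$ of $M_0$ with respect to $\bar\gamma$ and $\bar\delta$ have the same degree; i.e. $\langle M;\bar\gamma\rangle$ and $\langle M;\bar\delta\rangle$ have the same $\lambda$-dimension.
   Context: A length function on $R$-modules is a function $\lambda$ from $R$-modules to $\mathbb{R}_{\ge0}\cup\{\infty\}$ with $\lambda(0)=0$, invariant under isomorphism, additive on short exact sequences, and with $\lambda(N)=\sup\{\lambda(N'):N'\le N$ finitely generated$\}$. For a tuple $\bar\gamma=(\gamma_1,\dots,\gamma_k)$ generating $T$, let $\phi:R[x_1,\dots,x_k]\to T$ be the surjective $R$-algebra homomorphism with $x_i\mapsto\gamma_i$; $\langle M;\bar\gamma\rangle$ is $M$ viewed as an $R[x_1,\dots,x_k]$-module via $\phi$. Let $T_n=\phi(S_n)$ where $S_n$ is the set of polynomials of total degree $\le n$. Then there is a polynomial $q_{\bar\gamma}\in\mathbb{R}[t]$ with $\lambda(T_nM_0)=q_{\bar\gamma}(n)$ for all large $n$; the $\lambda$-dimension of $\langle M;\bar\gamma\rangle$ is the degree of its leading term. *)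

From HB Require Import structures.
From mathcomp Require Import all_boot all_order all_algebra.
From mathcomp Require Import boolp classical_sets reals constructive_ereal ereal.
From mathcomp Require mpoly.

Set Implicit Arguments.
Unset Strict Implicit.
Unset Printing Implicit Defensive.

Import Order.TTheory GRing.Theory Num.Theory.
Local Open Scope classical_set_scope.
Local Open Scope ring_scope.

Section Span.
Variables (R : pzRingType) (V : lmodType R).

Definition spanset (S : set V) : set V :=
  [set v | exists s : seq (R * V),
      (forall p, p \in s -> S p.2) /\ v = \sum_(p <- s) p.1 *: p.2].

Definition spanpred (S : set V) : pred V := fun v => `[< spanset S v >].

Lemma spanpred_closed (S : set V) : subsemimod_closed (spanpred S).
Proof.
split; [split|].
- apply/asboolP; exists [::]; split=> //; by rewrite big_nil.
- move=> u v /asboolP [su [Hsu ->]] /asboolP [sv [Hsv ->]].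
  apply/asboolP; exists (su ++ sv); split; last by rewrite big_cat.
  by move=> p; rewrite mem_cat => /orP [] ?; [apply: Hsu | apply: Hsv].
- move=> a v Hv; have /asboolP [s [Hs ->]] := Hv.
  rewrite /in_mem /= /spanpred; apply/asboolP.
  exists [seq (a * p.1, p.2) | p <- s]; split.
    by move=> p /mapP [q qs ->] /=; apply: Hs.
  by rewrite big_map scaler_sumr; apply: eq_bigr => p _; rewrite scalerA.
Qed.

Definition spanT (S : set V) : Type := {v : V | spanpred S v}.

HB.instance Definition _ (S : set V) := SubChoice.on (spanT S).
HB.instance Definition _ (S : set V) :=
  GRing.SubChoice_isSubLmodule.Build R V (spanpred S) (spanT S)
    (spanpred_closed S).

Definition is_submod (S : set V) : Prop :=
  S 0 /\ (forall (a : R) (u v : V), S u -> S v -> S (a *: u + v)).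

Definition fin_gen (S : set V) : Prop :=
  exists s : seq V, S = spanset [set x | x \in s].

End Span.

Definition noetherian (R : comNzRingType) : Prop :=
  forall I : set R^o, is_submod I -> fin_gen I.

Record length_function (R : comNzRingType) (Rr : realType) := LengthFunction {
  lam :> forall V : lmodType R, \bar Rr;
  lam_ge0 : forall V : lmodType R, (0 <= lam V)%E;
  lam_zero : forall V : lmodType R, (forall v : V, v = 0) -> lam V = 0%E;
  lam_iso : forall (V W : lmodType R) (f : {linear V -> W}),
      bijective f -> lam V = lam W;
  lam_ses : forall (U V W : lmodType R) (f : {linear U -> V}) (g : {linear V -> W}),
      injective f -> (forall w, exists v, g v = w) ->
      (forall v, g v = 0 <-> exists u, f u = v) ->
      lam V = (lam U + lam W)%E;
  lam_sup : forall V : lmodType R,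
      lam V = ereal_sup [set lam (spanT [set x : V | x \in s]) | s in [set: seq V]]
}.

Section Restr.
Variables (R : comNzRingType) (T : comAlgType R) (M : lmodType T).

Definition restr : Type := M.
HB.instance Definition _ := GRing.Zmodule.on restr.

Definition restr_scale (r : R) (m : restr) : restr := (r%:A : T) *: (m : M).

Lemma restr_scaleA a b v : restr_scale a (restr_scale b v) = restr_scale (a * b) v.
Proof. by rewrite /restr_scale scalerA -scalerAl mul1r scalerA. Qed.
Lemma restr_scale1 : left_id 1 restr_scale.
Proof. by move=> v; rewrite /restr_scale scale1r scale1r. Qed.
Lemma restr_scaleDr : right_distributive restr_scale +%R.
Proof. by move=> a u v; rewrite /restr_scale scalerDr. Qed.
Lemma restr_scaleDl v : {morph restr_scale^~ v : a b / a + b}.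
Proof. by move=> a b; rewrite /restr_scale scalerDl scalerDl. Qed.

HB.instance Definition _ := GRing.Zmodule_isLmodule.Build R restr
  restr_scaleA restr_scale1 restr_scaleDr restr_scaleDl.
End Restr.

Section Hilbert.
Variables (R : comNzRingType) (T : comAlgType R) (k : nat) (g : 'I_k -> T).

Definition phi (p : mpoly.mpoly k R) : T := mpoly.mmap (fun c : R => c%:A) g p.

Definition generates : Prop := forall t : T, exists p, phi p = t.

Definition Tn (n : nat) : set T :=
  [set phi p | p in [set p : mpoly.mpoly k R | all (fun m => (mpoly.mdeg m <= n)%N) (mpoly.msupp p)]].

Variable (M : lmodType T).

Definition TnM0 (M0 : set (restr M)) (n : nat) : set (restr M) :=
  spanset [set x : restr M | exists t m, Tn n t /\ M0 m /\ x = (t *: (m : M) : M)].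

Definition hilbert_poly (Rr : realType) (lam : length_function R Rr)
    (M0 : set (restr M)) (q : {poly Rr}) : Prop :=
  exists N : nat, forall n : nat, (N <= n)%N ->
    lam (spanT (TnM0 M0 n)) = (q.[n%:R])%:E.
End Hilbert.

From HB Require Import structures.
From mathcomp Require Import all_boot all_order all_algebra zify.
From mathcomp Require Import boolp classical_sets reals constructive_ereal ereal.
From mathcomp Require mpoly.
Import (canonicals, coercions) mpoly.
Import Order.TTheory GRing.Theory Num.Theory.

Set Implicit Arguments.
Unset Strict Implicit.
Unset Printing Implicit Defensive.

Local Open Scope classical_set_scope.
Local Open Scope ring_scope.

(* If every generator of [del] is a polynomial of degree at most [c] in [gam],
   then T^del_n is contained in T^gam_(cn), hence T^del_n M0 in T^gam_(cn) M0.
   A length function is monotone under injections, so q_del(n) <= q_gam(cn)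
   for large n; since q_del(n) >= 0, comparing leading terms shows that
   deg q_del <= deg q_gam.  Exchanging the two tuples gives equality. *)

Lemma msizeM_leq (n : nat) (R : nzRingType) (p q : mpoly.mpoly n R) :
  (mpoly.msize (p * q) <= (mpoly.msize p + mpoly.msize q).-1)%N.
Proof.
have [->|nz_p] := eqVneq p 0; first by rewrite mul0r mpoly.msize0.
have [->|nz_q] := eqVneq q 0; first by rewrite mulr0 mpoly.msize0.
have [->|nz_pq] := eqVneq (p * q) 0; first by rewrite mpoly.msize0.
rewrite -!mpoly.mlead_deg // addSn addnS ltnS -mpoly.mdegD.
exact/mpoly.lemc_mdeg/mpoly.mleadM_le.
Qed.

Section Filtration.
Variables (R : comNzRingType) (T : comAlgType R) (k : nat) (g : 'I_k -> T).

Lemma phiE p : phi g p = mpoly.mmap (in_alg T) g p.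
Proof. by []. Qed.

Lemma Tn_msizeP n t :
  Tn g n t <-> exists2 p, (mpoly.msize p <= n.+1)%N & phi g p = t.
Proof.
split=> [[p /= /allP le_p <-]|[p le_p <-]]; exists p => //=.
  by rewrite mpoly.msizeE; apply/bigmax_leqP_seq => m /le_p.
by apply/allP => m /mpoly.msize_mdeg_lt/leq_trans/(_ le_p); rewrite ltnS.
Qed.

Lemma Tn_le m n t : (m <= n)%N -> Tn g m t -> Tn g n t.
Proof.
move=> le_mn /Tn_msizeP[p le_p <-]; apply/Tn_msizeP.
by exists p => //; apply: leq_trans le_p _.
Qed.

Lemma Tn0 n : Tn g n 0.
Proof. by apply/Tn_msizeP; exists 0; rewrite ?mpoly.msize0 ?phiE ?raddf0. Qed.

Lemma Tn1 : Tn g 0 1.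
Proof. by apply/Tn_msizeP; exists 1; rewrite ?mpoly.msize1 ?phiE ?rmorph1. Qed.

Lemma TnD n s t : Tn g n s -> Tn g n t -> Tn g n (s + t).
Proof.
move=> /Tn_msizeP[p le_p <-] /Tn_msizeP[q le_q <-]; apply/Tn_msizeP.
exists (p + q); last by rewrite !phiE raddfD.
by apply: leq_trans (mpoly.msizeD_le p q) _; rewrite geq_max le_p le_q.
Qed.

Lemma TnZ n r t : Tn g n t -> Tn g n (r%:A * t).
Proof.
move=> /Tn_msizeP[p le_p <-]; apply/Tn_msizeP.
exists (r *: p); last by rewrite !phiE mpoly.mmapZ.
exact: leq_trans (mpoly.msizeZ_le _ _) le_p.
Qed.

Lemma TnM m n s t : Tn g m s -> Tn g n t -> Tn g (m + n) (s * t).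
Proof.
move=> /Tn_msizeP[p le_p <-] /Tn_msizeP[q le_q <-]; apply/Tn_msizeP.
exists (p * q); last by rewrite !phiE rmorphM.
have := msizeM_leq p q; lia.
Qed.

Lemma TnX n e t : Tn g n t -> Tn g (n * e) (t ^+ e).
Proof.
move=> Tt; elim: e => [|e IHe]; first by rewrite muln0 expr0; exact: Tn1.
by rewrite exprS mulnS; apply: TnM.
Qed.

Lemma Tn_exhaustive : generates g -> forall t, exists n, Tn g n t.
Proof.
move=> gen_g t; have [p <-] := gen_g t.
by exists (mpoly.msize p).-1; apply/Tn_msizeP; exists p => //; apply: leqSpred.
Qed.

End Filtration.

Lemma Tn_bounded_family (R : comNzRingType) (T : comAlgType R) (k k' : nat)
    (g : 'I_k -> T) (d : 'I_k' -> T) :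
  generates g -> exists c, forall i, Tn g c (d i).
Proof.
move=> gen_g; have [n Tn_d] := choice (fun i => Tn_exhaustive gen_g (d i)).
by exists (\max_i n i) => i; apply: Tn_le (Tn_d i); apply: leq_bigmax.
Qed.

Lemma Tn_subset_mul (R : comNzRingType) (T : comAlgType R) (k k' : nat)
    (g : 'I_k -> T) (d : 'I_k' -> T) (c n : nat) :
  (forall i, Tn g c (d i)) -> Tn d n `<=` Tn g (c * n).
Proof.
move=> Tn_d t /Tn_msizeP[p le_p <-]; rewrite phiE /mpoly.mmap big_seq.
apply: (big_ind (Tn g (c * n))) => [|s u|m m_p]; [exact: Tn0|exact: TnD|].
have le_m : (mpoly.mdeg m <= n)%N.
  by rewrite -ltnS; apply: leq_trans (mpoly.msize_mdeg_lt m_p) le_p.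
apply/TnZ/(Tn_le (leq_mul (leqnn c) le_m)).
rewrite mpoly.mdegE /mpoly.mmap1.
apply: (big_ind2 (fun t e => Tn g (c * e) t)) => [|s1 s2 e1 e2 T1 T2|i _].
- by rewrite muln0; exact: Tn1.
- by rewrite mulnDr; apply: TnM.
- exact: TnX.
Qed.

Lemma spansetS (R : pzRingType) (V : lmodType R) (A B : set V) :
  A `<=` B -> spanset A `<=` spanset B.
Proof. by move=> AB v [l [l_A ->]]; exists l; split=> // x /l_A /AB. Qed.

Section SpanMap.
Variables (R : pzRingType) (V W : lmodType R) (f : {linear V -> W}) (s : seq V).

Lemma span_map_mem (v : spanT [set x | x \in s]) :
  spanpred [set x | x \in map f s] (f (val v)).
Proof.
have /asboolP[l [l_s ->]] := valP v; apply/asboolP.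
exists [seq (x.1, f x.2) | x <- l]; split.
  by move=> _ /mapP[x /l_s x_s ->]; apply: map_f.
by rewrite big_map linear_sum; apply: eq_bigr => x _; rewrite linearZ.
Qed.

Definition span_map (v : spanT [set x | x \in s]) :
    spanT [set x | x \in map f s] :=
  exist _ (f (val v)) (span_map_mem v).

Lemma span_map_is_linear : linear span_map.
Proof. by move=> a u v; apply: val_inj; rewrite /= !linearP. Qed.

HB.instance Definition _ :=
  GRing.isLinear.Build R _ _ _ span_map span_map_is_linear.

Lemma span_map_surj w : exists v, span_map v = w.
Proof.
have /asboolP[l [l_fs w_l]] := valP w.
pose pre y := nth 0 s (index y (map f s)).
have f_pre y : y \in map f s -> f (pre y) = y.
  move=> y_fs; rewrite -(nth_map 0 0) ?linear0 ?nth_index //.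
  by rewrite -(size_map f) index_mem.
have span_pre : spanpred [set x | x \in s] (\sum_(x <- l) x.1 *: pre x.2).
  apply/asboolP; exists [seq (x.1, pre x.2) | x <- l].
  split; last by rewrite big_map.
  move=> _ /mapP[x /l_fs x_fs ->] /=.
  by rewrite mem_nth // -(size_map f) index_mem.
exists (exist (spanpred _) _ span_pre); apply: val_inj.
rewrite /= w_l linear_sum.
by apply: eq_big_seq => x /l_fs x_fs; rewrite linearZ f_pre.
Qed.

Hypothesis f_inj : injective f.

Lemma span_map_bij : bijective span_map.
Proof.
have [h span_mapK] := choice span_map_surj.
exists h => [v|//]; apply/val_inj/f_inj.
by have /(congr1 val) := span_mapK (span_map v).
Qed.

End SpanMap.

(* An injective map sends the submodule spanned by [s] isomorphically onto the
   one spanned by [map f s], so [lam_sup] yields monotonicity. *)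
Lemma lam_le_of_inj (R : comNzRingType) (Rr : realType)
    (lam : length_function R Rr) (V W : lmodType R) (f : {linear V -> W}) :
  injective f -> (lam V <= lam W)%E.
Proof.
move=> f_inj; rewrite (lam_sup lam V) (lam_sup lam W).
apply: ge_ereal_sup => _ [s _ <-].
rewrite (lam_iso lam (span_map_bij s f_inj)).
by apply: ereal_sup_ubound; exists (map f s).
Qed.

Section SpanIncl.
Variables (R : pzRingType) (V : lmodType R) (A B : set V).
Hypothesis AB : A `<=` B.

Lemma span_incl_mem (v : spanT A) : spanpred B (val v).
Proof. by apply/asboolP/(spansetS AB)/asboolP/(valP v). Qed.

Definition span_incl (v : spanT A) : spanT B :=
  exist _ (val v) (span_incl_mem v).

Lemma span_incl_is_linear : linear span_incl.
Proof. by move=> a u v; apply: val_inj. Qed.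

HB.instance Definition _ :=
  GRing.isLinear.Build R _ _ _ span_incl span_incl_is_linear.

Lemma span_incl_inj : injective span_incl.
Proof. by move=> u v [] /val_inj. Qed.

End SpanIncl.

Lemma lam_spanS (R : comNzRingType) (Rr : realType) (lam : length_function R Rr)
    (V : lmodType R) (A B : set V) :
  A `<=` B -> (lam (spanT A) <= lam (spanT B))%E.
Proof.
move=> AB; apply: (lam_le_of_inj lam (f := span_incl AB)).
exact: span_incl_inj.
Qed.

Lemma TnM0S (R : comNzRingType) (T : comAlgType R) (M : lmodType T)
    (M0 : set (restr M)) (k k' : nat) (g : 'I_k -> T) (d : 'I_k' -> T)
    (m n : nat) :
  Tn d m `<=` Tn g n -> TnM0 d M0 m `<=` TnM0 g M0 n.
Proof.
move=> Tn_dg; apply: spansetS => _ [t [x [Tt [M0x ->]]]].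
by exists t, x; split=> //; apply: Tn_dg.
Qed.

Lemma horner_lead_take (R : comNzRingType) (p : {poly R}) x :
  p.[x] = lead_coef p * x ^+ (size p).-1 + (take_poly (size p).-1 p).[x].
Proof.
rewrite -[in LHS](poly_take_drop (size p).-1 p) hornerD hornerM hornerXn addrC.
rewrite [drop_poly _ _]size1_polyC ?size_drop_poly; last by lia.
by rewrite hornerC coef_drop_poly add0n.
Qed.

Section PolyGrowth.
Variable R : archiRealFieldType.

Lemma norm_horner_mulX_le (p : {poly R}) m : (size p <= m)%N ->
  exists C, forall x, 1 <= x -> `|p.[x]| * x <= C * x ^+ m.
Proof.
move=> le_pm; exists (\sum_(i < size p) `|p`_i|) => x x_ge1.
have x_ge0 : 0 <= x := le_trans ler01 x_ge1.
rewrite horner_coef (le_trans (ler_wpM2r x_ge0 (ler_norm_sum _ _ _))) //.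
rewrite !mulr_suml; apply: ler_sum => i _.
rewrite normrM normrX (ger0_norm x_ge0) -mulrA -exprSr.
by apply/ler_wpM2l/ler_weXn2l => //; have := ltn_ord i; lia.
Qed.

Lemma size_poly_le_of_norm_le (p q : {poly R}) (N : nat) :
  (forall n, (N <= n)%N -> `|p.[n%:R]| <= `|q.[n%:R]|) -> (size p <= size q)%N.
Proof.
move=> le_pq; rewrite leqNgt; apply/negP => lt_qp.
have size_q : (size q <= (size p).-1)%N by move: lt_qp; clear; lia.
set d := (size p).-1 in size_q *; set a := lead_coef p; set t := take_poly d p.
have a_gt0 : 0 < `|a|.
  by rewrite normr_gt0 lead_coef_eq0 -size_poly_gt0 (leq_ltn_trans _ lt_qp).
have [A bound_t] := norm_horner_mulX_le (size_take_poly d p).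
have [B bound_q] := norm_horner_mulX_le size_q.
pose n := maxn (maxn N 1) (Num.bound ((A + B) / `|a|)).
pose x : R := n%:R.
have x_ge1 : 1 <= x by rewrite ler1n leq_max leq_maxr orbT.
have x_ge0 : 0 <= x := le_trans ler01 x_ge1.
have lead_le : `|a| * x <= A + B.
  rewrite -(ler_pM2r (exprn_gt0 d (lt_le_trans ltr01 x_ge1))) mulrAC.
  have -> : `|a| * x ^+ d = `|p.[x] - t.[x]|.
    rewrite (horner_lead_take p) -/d -/a -/t addrK.
    by rewrite normrM normrX (ger0_norm x_ge0).
  apply: le_trans (ler_wpM2r x_ge0 (ler_normB _ _)) _.
  rewrite mulrDl [(A + B) * _]mulrDl addrC lerD ?bound_t //.
  apply: le_trans (bound_q x x_ge1); rewrite ler_wpM2r //.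
  by apply: le_pq; rewrite leq_max leq_maxl.
have bound_lt : (A + B) / `|a| < x.
  apply: lt_le_trans (archi_boundP _) _.
    by rewrite divr_ge0 // (le_trans _ lead_le) // mulr_ge0.
  by rewrite ler_nat leq_maxr.
move: lead_le; rewrite mulrC -ler_pdivlMr // => /(lt_le_trans bound_lt).
by rewrite ltxx.
Qed.

End PolyGrowth.

Lemma hilbert_poly_size_le (R : comNzRingType) (Rr : realType)
    (lam : length_function R Rr) (T : comAlgType R) (M : lmodType T)
    (M0 : set (restr M)) (k k' : nat) (g : 'I_k -> T) (d : 'I_k' -> T) (qg qd : {poly Rr}) :
  generates g -> hilbert_poly g lam M0 qg -> hilbert_poly d lam M0 qd ->
  (size qd <= size qg)%N.
Proof.
move=> gen_g [Ng qg_lam] [Nd qd_lam].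
have [c Tn_d] := Tn_bounded_family d gen_g.
have Tn_dg n : Tn d n `<=` Tn g (c.+1 * n).
  by apply: Tn_subset_mul => i; apply: Tn_le (Tn_d i).
rewrite -(@size_comp_poly2 _ qg (c.+1%:R *: 'X)); last first.
  by rewrite size_scale ?size_polyX ?pnatr_eq0.
apply: (@size_poly_le_of_norm_le _ _ _ (maxn Nd Ng)) => n le_n.
have qd_n := qd_lam n (leq_trans (leq_maxl _ _) le_n).
have le_cn : (Ng <= c.+1 * n)%N.
  by rewrite (leq_trans (leq_trans (leq_maxr _ _) le_n)) // leq_pmull.
have qg_n := qg_lam _ le_cn.
rewrite horner_comp hornerZ hornerX -natrM.
have qd_ge0 : 0 <= qd.[n%:R] by rewrite -lee_fin -qd_n lam_ge0.
rewrite (ger0_norm qd_ge0) (le_trans _ (ler_norm _)) // -lee_fin -qd_n -qg_n.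
exact/lam_spanS/TnM0S/Tn_dg.
Qed.

Theorem lemma7p3 (R : comNzRingType) (Rr : realType) (lam : length_function R Rr)
    (T : comAlgType R) (M : lmodType T) (M0 : set (restr M))
    (k k' : nat) (gam : 'I_k -> T) (del : 'I_k' -> T) (qg qd : {poly Rr}) :
  noetherian R ->
  is_submod M0 -> fin_gen M0 -> (lam (spanT M0) < +oo)%E ->
  spanset (M0 : set M) = setT ->
  generates gam -> generates del ->
  hilbert_poly gam lam M0 qg -> hilbert_poly del lam M0 qd ->
  (size qg).-1 = (size qd).-1.
Proof.
(* Noetherianity and the hypotheses on [M0] only guarantee that Hilbert
   polynomials exist; here they are given. *)
move=> _ _ _ _ _ gen_gam gen_del hil_gam hil_del.
have := hilbert_poly_size_le gen_gam hil_gam hil_del.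
have := hilbert_poly_size_le gen_del hil_del hil_gam.
lia.
Qed.
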